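(* Let $N>1$ be odd and let $\mathcal{C}$ be a metaplectic modular category with the fusion rules of $SO(N)_2$, and let $Z$ be its unique nontrivial simple object of dimension $1$. Then $Z$ is a boson: its twist satisfies $\theta_Z=1$.
   Context: The fusion rules of $SO(N)_2$ ($N>1$ odd): there are simple objects $\mathbf{1}, Z$ of dimension $1$, $X_1,X_2$ of dimension $\sqrt N$, and $Y_1,\dots,Y_{(N-1)/2}$ of dimension $2$, with $Z\otimes Z\cong\mathbf 1$, $Z\otimes Y_i\cong Y_i$, $Z\otimes X_1\cong X_2$, $Z\otimes X_2\cong X_1$, $X_i^{\otimes 2}\cong \mathbf{1}\oplus\bigoplus_{j}Y_j$, $X_1\otimes X_2\cong Z\oplus\bigoplus_j Y_j$, $Y_i\otimes Y_j\cong Y_{\min\{i+j,N-i-j\}}\oplus Y_{|i-j|}$ for $i\ne j$, and $Y_i^{\otimes 2}\cong \mathbf{1}\oplus Z\oplus Y_{\min\{2i,N-2i\}}$. A metaplectic modular category is a unitary modular category with the same fusion rules as $SO(N)_2$ for some odd $N>1$. *)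

From HB Require Import structures.
From mathcomp Require Import all_boot all_order all_algebra.
Set Implicit Arguments. Unset Strict Implicit. Unset Printing Implicit Defensive.
Import Order.TTheory GRing.Theory Num.Theory.
Local Open Scope ring_scope.

(* ---------- labels of SO(N)_2 ----------
   label 0 = 1, label 1 = Z, label 2 = X_1, label 3 = X_2,
   label (j+3) = Y_j  for 1 <= j <= (N-1)/2.                           *)
Definition nlab (N : nat) : nat := (N./2 + 3).+1.
Definition lab (N : nat) := 'I_(nlab N).
Definition lab1 {N : nat} : lab N := inord 0.
Definition labZ {N : nat} : lab N := inord 1.

Definition ymin (N s : nat) : nat := minn s (N - s).

(* fusb N a b c  <=>  c occurs (with multiplicity 1) in a (x) b.
   All SO(N)_2 fusion multiplicities are 0 or 1.                        *)
Definition fusb (N a b c : nat) : bool :=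
  if a == 0%N then c == b
  else if b == 0%N then c == a
  else if a == 1%N then
    (if b == 1%N then c == 0%N else if b == 2%N then c == 3%N
     else if b == 3%N then c == 2%N else c == b)
  else if b == 1%N then
    (if a == 2%N then c == 3%N else if a == 3%N then c == 2%N else c == a)
  else if (a <= 3)%N && (b <= 3)%N then
    [|| (a == b) && (c == 0%N), (a != b) && (c == 1%N) | (4 <= c)%N]
  else if (a <= 3)%N || (b <= 3)%N then (c == 2%N) || (c == 3%N)
  else
    let i := (a - 3)%N in let j := (b - 3)%N in
    if i == j then [|| c == 0%N, c == 1%N | c == (ymin N (i + i) + 3)%N]
    else (c == (ymin N (i + j) + 3)%N) || (c == ((i - j) + (j - i) + 3)%N).

Definition adm {N : nat} (a b c : lab N) : bool := fusb N a b c.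

Section Data.
Variables (C : numClosedFieldType) (N : nat).
Notation L := (lab N).
(* F a b c d e f = [F^{abc}_d]_{e f} : basis change from
   ((a b)_e c)_d  to  (a (b c)_f)_d   (Bonderson conventions).
   R a b c = R^{ab}_c.                                                    *)
Variables (F : L -> L -> L -> L -> L -> L -> C) (R : L -> L -> L -> C).

Definition admF (a b c d e f : L) : bool :=
  [&& adm a b e, adm e c d, adm b c f & adm a f d].

Definition F_support : Prop :=
  forall a b c d e f, ~~ admF a b c d e f -> F a b c d e f = 0.
Definition R_support : Prop :=
  forall a b c, ~~ adm a b c -> R a b c = 0.

Definition F_unit_normalized : Prop :=
  forall a b c d e f, [|| a == lab1, b == lab1 | c == lab1] ->
    admF a b c d e f -> F a b c d e f = 1.

Definition pentagon : Prop :=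
  forall a b c d e f g k l : L,
    F f c d e g l * F a b l e f k =
    \sum_(h : L) F a b c g f h * F a h d e g k * F b c d k h l.

Definition hexagons : Prop :=
  forall a b c d e g : L,
    (R c a e * F a c b d e g * R c b g =
       \sum_(f : L) F c a b d e f * R c f d * F a b c d f g)
 /\ ((R a c e)^-1 * F a c b d e g * (R b c g)^-1 =
       \sum_(f : L) F c a b d e f * (R f c d)^-1 * F a b c d f g).

Definition F_unitary : Prop :=
  forall a b c d e e' : L,
    adm a b e -> adm e c d -> adm a b e' -> adm e' c d ->
    \sum_(f : L) F a b c d e f * (F a b c d e' f)^* = (e == e')%:R.
Definition R_unitary : Prop :=
  forall a b c, adm a b c -> R a b c * (R a b c)^* = 1.

(* quantum dimension (all labels are self-dual): d_a = |[F^{aaa}_a]_{11}|^-1 *)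
Definition qdim (a : L) : C := (`|F a a a a lab1 lab1|)^-1.

Definition twist (a : L) : C := \sum_(c : L) (qdim c / qdim a) * R a a c.

(* unnormalised S-matrix (all labels self-dual) *)
Definition Smatrix : 'M[C]_(nlab N) :=
  \matrix_(a, b) \sum_(c : L) (adm a b c)%:R * (twist c / (twist a * twist b)) * qdim c.

Definition modular : Prop := \det Smatrix != 0.

Definition unitary_modular_SO2 : Prop :=
  F_support /\ R_support /\ F_unit_normalized /\ pentagon /\
  hexagons /\ F_unitary /\ R_unitary /\ modular.
End Data.

From HB Require Import structures.
From mathcomp Require Import all_boot all_order all_algebra zify ring.
Import Order.TTheory GRing.Theory Num.Theory.
Local Open Scope ring_scope.

(* Since Z (x) Z = 1, the twist of Z is theta_Z = R^{ZZ}_1, so the claim is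
   R^{ZZ}_1 = 1.  Dividing the two hexagon equations whenever their right-hand
   sums have a single term gives the monodromy relation
   M^{ca}_e M^{cb}_g = M^{cf}_d, with M^{ab}_c = R^{ab}_c R^{ba}_c.  Applied to
   X_1 (x) X_1 with c = Z and d in {1, Y_1}, it makes the monodromy of Z with Y_1
   trivial, and then R^{Y_1 Y_1}_1 and R^{Y_1 Y_1}_Z agree up to sign.  A
   hexagon identifies R^{ZZ}_1 with F^{Z Y_1 Z}_{Y_1; Y_1 Y_1}, and combining a
   pentagon with two more hexagons forces this F-symbol to be 1. *)

Definition zfus (b : nat) : nat :=
  match b with 0 => 1 | 1 => 0 | 2 => 3 | 3 => 2 | _ => b end%N.

Lemma zfusK : involutive zfus. Proof. by case=> [|[|[|[|b]]]]. Qed.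

Lemma fusb_Zl N b c : fusb N 1 b c = (c == zfus b).
Proof. by case: b => [|[|[|[|b]]]]. Qed.

Lemma fusb_Zr N a c : fusb N a 1 c = (c == zfus a).
Proof. by case: a => [|[|[|[|a]]]]. Qed.

Lemma fusb_0l N b c : fusb N 0 b c = (c == b). Proof. by []. Qed.

Lemma fusb_0r N a c : fusb N a 0 c = (c == a).
Proof. by rewrite /fusb; case: eqP => // ->. Qed.

Lemma val_inord_lab N k : (k < 4)%N -> nat_of_ord (inord k : lab N) = k.
Proof. by move=> hk; rewrite inordK // /nlab; lia. Qed.

Lemma val_lab1 N : nat_of_ord (@lab1 N) = 0%N. Proof. exact: val_inord_lab. Qed.
Lemma val_labZ N : nat_of_ord (@labZ N) = 1%N. Proof. exact: val_inord_lab. Qed.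

Section Skeletal.
Variables (C : numClosedFieldType) (N : nat).
Variables (F : lab N -> lab N -> lab N -> lab N -> lab N -> lab N -> C)
  (R : lab N -> lab N -> lab N -> C).
Hypotheses (Fsupp : F_support F) (Rsupp : R_support R)
  (Fnorm : F_unit_normalized F) (Fpent : pentagon F) (FRhex : hexagons F R)
  (Funit : F_unitary F) (Runit : R_unitary R).

Lemma R_neq0 {a b c} : adm a b c -> R a b c != 0.
Proof.
by move=> /Runit RR; apply: contra_eq_neq RR => ->; rewrite mul0r eq_sym oner_neq0.
Qed.

Lemma admF_of_F_neq0 {a b c d e f} : F a b c d e f != 0 -> admF a b c d e f.
Proof. by apply: contraNT => /Fsupp ->. Qed.

Lemma normF_single {a b c d e f0} :
  (forall f, f != f0 -> F a b c d e f = 0) -> admF a b c d e f0 ->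
  `|F a b c d e f0| = 1.
Proof.
move=> F0 /and4P[abe ecd _ _].
have := Funit _ _ _ _ _ _ abe ecd abe ecd.
rewrite eqxx (big_only1 f0) // => [|f /F0 -> _].
  by rewrite -normCK => /eqP; rewrite sqrp_eq1 // => /eqP.
by rewrite mul0r.
Qed.

Lemma F_neq0_single {a b c d e f0} :
  (forall f, f != f0 -> F a b c d e f = 0) -> admF a b c d e f0 ->
  F a b c d e f0 != 0.
Proof. by move=> F0 /(normF_single F0) F1; rewrite -normr_eq0 F1 oner_eq0. Qed.

Definition monodromy (a b c : lab N) : C := R a b c * R b a c.

Lemma hexagons_single {a b c d e} g {f0} :
  (forall f, f != f0 -> F c a b d e f = 0) ->
  R c a e * F a c b d e g * R c b g = F c a b d e f0 * R c f0 d * F a b c d f0 g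
  /\ (R a c e)^-1 * F a c b d e g * (R b c g)^-1
     = F c a b d e f0 * (R f0 c d)^-1 * F a b c d f0 g.
Proof.
move=> F0; have [hex1 hex2] := FRhex a b c d e g.
by rewrite hex1 hex2 !(big_only1 f0) // => f /F0 -> _; rewrite !mul0r.
Qed.

Lemma monodromy_hexagon {a b c d e} g {f0} :
  (forall f, f != f0 -> F c a b d e f = 0) -> admF c a b d e f0 ->
  F a c b d e g != 0 -> F a b c d f0 g != 0 ->
  monodromy c a e * monodromy c b g = monodromy c f0 d.
Proof.
move=> F0 adm0 Fg Ff0; have Ff := F_neq0_single F0 adm0.
case/and4P: adm0 => cae _ _ cfd.
case/and4P: (admF_of_F_neq0 Fg) => ace _ cbg _.
case/and4P: (admF_of_F_neq0 Ff0) => _ fcd bcg _.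
have [hex1 hex2] := hexagons_single g F0.
have Rfc := R_neq0 fcd; have Rac := R_neq0 ace; have Rbc := R_neq0 bcg.
have := congr2 (fun u v => u / v) hex1 hex2 => /=.
have -> : R c a e * F a c b d e g * R c b g /
    ((R a c e)^-1 * F a c b d e g * (R b c g)^-1) =
    monodromy c a e * monodromy c b g.
  by rewrite /monodromy; field; rewrite Rbc Rac Fg.
have -> // : F c a b d e f0 * R c f0 d * F a b c d f0 g /
    (F c a b d e f0 * (R f0 c d)^-1 * F a b c d f0 g) =
    monodromy c f0 d.
  by rewrite /monodromy; field; rewrite Ff Ff0 Rfc.
Qed.

Lemma F_single_1m (a c d e f : lab N) :
  f != c -> F a lab1 c d e f = 0.
Proof.
move=> fc; apply/Fsupp/negP => /and4P[_ _ + _].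
by rewrite /adm val_lab1 fusb_0l val_eqE (negbTE fc).
Qed.

Lemma R_unit a : R a lab1 a = 1 /\ R lab1 a a = 1.
Proof.
have [hex1 hex2] := hexagons_single a (@F_single_1m a lab1 a a).
have adm1 (b : lab N) : adm lab1 b b by rewrite /adm val_lab1 fusb_0l.
have adm1r (b : lab N) : adm b lab1 b by rewrite /adm val_lab1 fusb_0r.
rewrite !Fnorm ?eqxx ?orbT /admF ?adm1 ?adm1r // !mulr1 !mul1r in hex1 hex2.
split; first by apply: (mulIf (R_neq0 (adm1r a))); rewrite mul1r.
apply: invr_inj; rewrite invr1.
by apply: (mulIf (invr_neq0 (R_neq0 (adm1 a)))); rewrite mul1r.
Qed.

Lemma F_single_Zl {b c d e f0 : lab N} : nat_of_ord f0 = zfus d ->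
  forall f, f != f0 -> F labZ b c d e f = 0.
Proof.
move=> f0E f; apply: contraNeq => /admF_of_F_neq0/and4P[_ _ _].
rewrite /adm val_labZ fusb_Zl => /eqP dE.
by apply/eqP/val_inj; rewrite /= f0E dE zfusK.
Qed.

Lemma F_single_Zm {a c d e f0 : lab N} : nat_of_ord f0 = zfus c ->
  forall f, f != f0 -> F a labZ c d e f = 0.
Proof.
move=> f0E f; apply: contraNeq => /admF_of_F_neq0/and4P[_ _ + _].
by rewrite /adm val_labZ fusb_Zl -f0E => /eqP/val_inj->.
Qed.

Lemma F_single_Zr {a b d e f0 : lab N} : nat_of_ord f0 = zfus b ->
  forall f, f != f0 -> F a b labZ d e f = 0.
Proof.
move=> f0E f; apply: contraNeq => /admF_of_F_neq0/and4P[_ _ + _].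
by rewrite /adm val_labZ fusb_Zr -f0E => /eqP/val_inj->.
Qed.

Lemma fusZ_Z : nat_of_ord (@lab1 N) = zfus (@labZ N).
Proof. by rewrite val_lab1 val_labZ. Qed.

Lemma twist_labZ : twist F R labZ = R labZ labZ lab1.
Proof.
have ZZ1 : admF (@labZ N) labZ labZ labZ lab1 lab1.
  by rewrite /admF /adm val_lab1 val_labZ.
have q1 : qdim F (@lab1 N) = 1.
  by rewrite /qdim Fnorm ?eqxx // ?normr1 ?invr1 // /admF /adm val_lab1.
have qZ : qdim F (@labZ N) = 1.
  by rewrite /qdim (normF_single (F_single_Zl fusZ_Z) ZZ1) invr1.
rewrite /twist (big_only1 lab1) // => [|c c1 _]; first by rewrite q1 qZ divr1 mul1r.
rewrite Rsupp ?mulr0 // /adm val_labZ fusb_Zl /=.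
by rewrite -[0%N](val_lab1 N) val_eqE.
Qed.

Lemma pentagon_single {a b c g f} d e k l {h0} :
  (forall h, h != h0 -> F a b c g f h = 0) ->
  F f c d e g l * F a b l e f k = F a b c g f h0 * F a h0 d e g k * F b c d k h0 l.
Proof. by move=> F0; rewrite Fpent (big_only1 h0) // => h /F0 -> _; rewrite !mul0r. Qed.

Section WithY1.
Hypothesis N_gt1 : (1 < N)%N.

Local Notation labX1 := (inord 2 : lab N).
Local Notation labX2 := (inord 3 : lab N).
Local Notation labY1 := (inord 4 : lab N).

Lemma val_labY1 : nat_of_ord labY1 = 4%N.
Proof.
rewrite inordK // /nlab; suff : (0 < N./2)%N by lia.
by case: N N_gt1 => [|[|n]].
Qed.

Lemma val_labX1 : nat_of_ord labX1 = 2%N. Proof. exact: val_inord_lab. Qed.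
Lemma val_labX2 : nat_of_ord labX2 = 3%N. Proof. exact: val_inord_lab. Qed.

Local Ltac lab_compute :=
  by rewrite /admF /adm ?val_lab1 ?val_labZ ?val_labX1 ?val_labX2 ?val_labY1.

Lemma monodromy_ZY1 : monodromy labZ labY1 labY1 = 1.
Proof.
have X1_sq (d f0 : lab N) : nat_of_ord f0 = zfus d ->
    admF labZ labX1 labX1 d labX2 f0 -> admF labX1 labZ labX1 d labX2 labX2 ->
    admF labX1 labX1 labZ d f0 labX2 ->
    monodromy labZ labX1 labX2 ^+ 2 = monodromy labZ f0 d.
  move=> f0E adm1 adm2 adm3; rewrite expr2.
  have X2E : nat_of_ord labX2 = zfus labX1 by lab_compute.
  apply: monodromy_hexagon (F_single_Zl f0E) adm1 _ _.
  - exact: F_neq0_single (F_single_Zm X2E) adm2.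
  - exact: F_neq0_single (F_single_Zr X2E) adm3.
have [R_Z1 R_1Z] := R_unit labZ.
rewrite -(X1_sq labY1 labY1) ?(X1_sq labZ lab1); try lab_compute.
by rewrite /monodromy R_Z1 R_1Z mulr1.
Qed.

Lemma fusZ_Y1 : nat_of_ord labY1 = zfus labY1. Proof. by rewrite val_labY1. Qed.

Lemma R_Y1Y1_sq : R labY1 labY1 lab1 ^+ 2 = R labY1 labY1 labZ ^+ 2.
Proof.
have F0 := F_single_Zr (a := labY1) (d := labZ) (e := lab1) fusZ_Y1.
have adm0 : admF labY1 labY1 labZ labZ lab1 labY1 by lab_compute.
have F1 := F_single_Zm (a := labY1) (d := labZ) (e := labY1) fusZ_Y1.
have adm1 : admF labY1 labZ labY1 labZ labY1 labY1 by lab_compute.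
have mY1Z : monodromy labY1 labZ labY1 = 1.
  by rewrite /monodromy mulrC; exact: monodromy_ZY1.
have := monodromy_hexagon labY1 F0 adm0 (F_neq0_single F0 adm0)
  (F_neq0_single F1 adm1).
by rewrite mY1Z mulr1 /monodromy -!expr2.
Qed.

Lemma R_ZZ_eq_F : R labZ labZ lab1 = F labZ labY1 labZ labY1 labY1 labY1.
Proof.
have F0 := F_single_Zl (b := labZ) (c := labY1) (e := lab1) fusZ_Y1.
have [hex _] := hexagons_single labY1 F0.
have FZ : F labZ labZ labY1 labY1 lab1 labY1 != 0.
  by apply: F_neq0_single F0 _; lab_compute.
have RZY : R labZ labY1 labY1 != 0 by apply: R_neq0; lab_compute.
apply: (mulfI FZ); apply: (mulIf RZY).
by rewrite (mulrC (F _ _ _ _ _ _)) hex; ring.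
Qed.

Lemma F_ZY1Z_eq1 : F labZ labY1 labZ labY1 labY1 labY1 = 1.
Proof.
have G_sq : F labY1 labZ labY1 lab1 labY1 labY1 ^+ 2 =
    R labY1 labZ labY1 ^+ 2 * F labZ labY1 labZ labY1 labY1 labY1.
  have F0 := F_single_Zr (a := labY1) (d := labY1) (e := labY1) fusZ_Z.
  rewrite expr2 (pentagon_single labY1 lab1 labY1 labY1 F0).
  rewrite (Fnorm labY1 lab1 labY1 lab1 labY1 labY1) ?eqxx ?orbT ?mulr1 //;
    last by lab_compute.
  have [hex _] := hexagons_single (a := labZ) (b := labZ) (d := labY1) labY1 F0.
  have [R_Y1 _] := R_unit labY1.
  by rewrite R_Y1 mulr1 in hex; rewrite -hex; ring.
have G_R : F labY1 labZ labY1 lab1 labY1 labY1 * R labY1 labY1 lab1 =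
    R labY1 labY1 labZ * R labY1 labZ labY1.
  have F1 := F_single_Zr (a := labY1) (d := lab1) (e := labZ) fusZ_Y1.
  have [hex _] := hexagons_single labY1 F1.
  have H : F labY1 labY1 labZ lab1 labZ labY1 != 0.
    by apply: F_neq0_single F1 _; lab_compute.
  by apply: (mulfI H); rewrite mulrA mulrAC -hex; ring.
have RY1 : R labY1 labY1 lab1 != 0 by apply: R_neq0; lab_compute.
have RY1Z : R labY1 labZ labY1 != 0 by apply: R_neq0; lab_compute.
apply: (mulfI (expf_neq0 2 RY1Z)); rewrite mulr1 -G_sq.
apply: (mulIf (expf_neq0 2 RY1)).
by rewrite -exprMn G_R R_Y1Y1_sq; ring.
Qed.

Lemma R_ZZ1 : R labZ labZ lab1 = 1.
Proof. by rewrite R_ZZ_eq_F F_ZY1Z_eq1. Qed.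
End WithY1.
End Skeletal.

Theorem lemma1 (C : numClosedFieldType) (N : nat) (HN : (1 < N)%N) (Nodd : odd N)
  (F : lab N -> lab N -> lab N -> lab N -> lab N -> lab N -> C)
  (R : lab N -> lab N -> lab N -> C) :
  unitary_modular_SO2 F R -> twist F R labZ = 1.
Proof.
case=> Fsupp [Rsupp [Fnorm [Fpent [FRhex [Funit [Runit _]]]]]].
rewrite twist_labZ //.
exact: R_ZZ1 Fsupp Fnorm Fpent FRhex Funit Runit HN.
Qed.
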